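(* Let $S=K[x_1,\dots,x_n]$ with $K$ an $F$-finite field of prime characteristic $p$, $I\subseteq S$ a squarefree monomial ideal, and $R=S/I$. Let $\mathfrak q$ be a monomial prime ideal of $R$, $\overline R=R/\mathcal P(\mathfrak q)$, $e\in\mathbb N$, $q=p^e$, and $f\in R$ with image $\overline f\in\overline R$. Then: (1) if $f\in\mathfrak q_e$, then $\overline f\in(\overline{\mathfrak q})_e$ (contraction computed in $\overline R$); (2) $\overline f\in\overline{\mathfrak q}^{[q]}$ if and only if $f\in\mathfrak q_e$.
   Context: A monomial ideal of $R$ is one generated by images of monomials. For an $F$-finite $F$-pure ring $A$ and ideal $J$, $J_e=\{f\in A\mid \varphi(f^{1/p^e})\in J \text{ for all }\varphi\in\operatorname{Hom}_A(A^{1/p^e},A)\}$ and $\mathcal P(J)=\bigcap_{s\in\mathbb N}J_s$ (Cartier core). $\overline{\mathfrak q}$ is the image of $\mathfrak q$ in $\overline R$. *)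

From mathcomp Require Import all_boot all_algebra.
From mathcomp Require Import mpoly.

Set Implicit Arguments.
Unset Strict Implicit.
Unset Printing Implicit Defensive.

Import GRing.Theory.
Local Open Scope ring_scope.

Section Ideals.
Variable A : comPzRingType.

Definition is_ideal (J : A -> Prop) : Prop :=
  [/\ J 0, (forall x y, J x -> J y -> J (x + y)) & (forall a x, J x -> J (a * x))].

Definition ideal_gen (G : A -> Prop) : A -> Prop :=
  fun x => forall J, is_ideal J -> (forall g, G g -> J g) -> J x.

Definition is_prime_ideal (J : A -> Prop) : Prop :=
  [/\ is_ideal J, ~ J 1 & (forall a b, J (a * b) -> J a \/ J b)].

Definition frob_power (J : A -> Prop) (q : nat) : A -> Prop :=
  ideal_gen (fun y => exists2 x, J x & y = x ^+ q).

(* Hom_A(A^{1/p^e}, A), identifying A^{1/p^e} with A via x^{1/p^e} |-> x: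
   additive maps phi : A -> A with phi (a^(p^e) * b) = a * phi b. *)
Definition cartier_map (p e : nat) (phi : A -> A) : Prop :=
  (forall x y, phi (x + y) = phi x + phi y) /\
  (forall a b, phi (a ^+ (p ^ e) * b) = a * phi b).

(* J_e = { f | phi(f^{1/p^e}) \in J for all phi in Hom_A(A^{1/p^e}, A) } *)
Definition cartier_contr (p e : nat) (J : A -> Prop) : A -> Prop :=
  fun f => forall phi, cartier_map p e phi -> J (phi f).

Definition cartier_core (p : nat) (J : A -> Prop) : A -> Prop :=
  fun f => forall s : nat, cartier_contr p s J f.

End Ideals.

Definition img_pred (A B : Type) (g : A -> B) (J : A -> Prop) : B -> Prop :=
  fun y => exists2 x, J x & y = g x.

Definition F_finite_field (K : fieldType) (p : nat) : Prop :=
  exists s : seq K, forall x : K,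
    exists c : 'I_(size s) -> K, x = \sum_(i < size s) (c i) ^+ p * s`_i.

Definition sqfree_monomial_ideal (K : fieldType) (n : nat)
  (I : {mpoly K[n]} -> Prop) : Prop :=
  exists M : 'X_{1..n} -> Prop,
    (forall m, M m -> forall i : 'I_n, (m i <= 1)%N) /\
    (forall x, I x <-> ideal_gen (fun y => exists2 m, M m & y = 'X_[m]) x).

Definition monomial_ideal_of (K : fieldType) (n : nat) (R : comPzRingType)
  (pi : {mpoly K[n]} -> R) (J : R -> Prop) : Prop :=
  exists M : 'X_{1..n} -> Prop,
    forall x, J x <-> ideal_gen (fun y => exists2 m, M m & y = pi 'X_[m]) x.

(* Write [q = p^e] and split an element of [qq_e] monomial by monomial.
   Monomials in which a variable of the monomial prime [qq] has exponent at
   least [q] lie in [qq^[q]].  Monomials containing a variable [x_i] that is a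
   zero divisor on the monomials divisible by the product [x^mout] of the
   variables outside [qq] lie in the Cartier core [P(qq)], because [x^mout]
   times a monomial kills every [phi (x_i)].  No other monomial [x^b] can occur:
   as [K] is [F]-finite there is a [p^-e]-linear [psi : K -> K] with
   [psi (f_b) = 1], and the [x^(b mod q)]-component of [f] over [S^q], with
   [psi] applied to its coefficients and multiplied by [x^mout], is a Cartier
   map that preserves [I] and sends [f] outside [qq].  Hence
   [qq_e = qq^[q] + P(qq)]; both claims follow since [R -> Rbar] kills [P(qq)]
   and [qq^[q]] is contained in [qq_e]. *)

From mathcomp Require Import all_boot all_algebra.
From mathcomp Require Import mpoly.
From mathcomp Require Import zify ring.
From Stdlib Require Import ClassicalEpsilon Classical_Prop.

Set Implicit Arguments.
Unset Strict Implicit.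
Unset Printing Implicit Defensive.
Import GRing.Theory.
Local Open Scope ring_scope.

Definition classicb (P : Prop) : bool :=
  if excluded_middle_informative P then true else false.

Lemma classicbP (P : Prop) : reflect P (classicb P).
Proof. by rewrite /classicb; case: excluded_middle_informative => H; constructor. Qed.

Section Ideals.
Variable A : comPzRingType.
Implicit Types (J G : A -> Prop) (x y : A).

Lemma ideal_gen_min G J : is_ideal J -> (forall g, G g -> J g) ->
  forall x, ideal_gen G x -> J x.
Proof. by move=> HJ HG x; apply. Qed.

Lemma ideal_gen_sub G g : G g -> ideal_gen G g.
Proof. by move=> Gg J _; apply. Qed.

Lemma ideal0 J : is_ideal J -> J 0.
Proof. by case. Qed.

Lemma idealD J x y : is_ideal J -> J x -> J y -> J (x + y).
Proof. by case=> _ HD _; apply: HD. Qed.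

Lemma idealMl J a x : is_ideal J -> J x -> J (a * x).
Proof. by case=> _ _ HM; apply: HM. Qed.

Lemma ideal_gen_ideal G : is_ideal (ideal_gen G).
Proof.
split; first by move=> J [].
- move=> x y Hx Hy J HJ HG.
  by apply: (idealD HJ); [apply: Hx | apply: Hy].
- by move=> a x Hx J HJ HG; apply: (idealMl _ HJ); apply: Hx.
Qed.

Lemma idealMr J a x : is_ideal J -> J x -> J (x * a).
Proof. by rewrite mulrC; apply: idealMl. Qed.

Lemma idealB J x y : is_ideal J -> J x -> J y -> J (x - y).
Proof. by move=> HJ Hx Hy; rewrite -mulN1r; apply: idealD => //; apply: idealMl. Qed.

Lemma ideal_sum J (I : Type) (r : seq I) (P : pred I) (F : I -> A) :
  is_ideal J -> (forall i, P i -> J (F i)) -> J (\sum_(i <- r | P i) F i).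
Proof.
by move=> HJ; apply: (big_ind J); [exact: ideal0 | move=> x y; exact: idealD].
Qed.

Lemma prime_idealX J x k : is_prime_ideal J -> J (x ^+ k) -> J x.
Proof.
case=> _ J1 HP; elim: k => [|k IHk]; first by rewrite expr0.
by rewrite exprS => /HP [] // /IHk.
Qed.

Lemma prime_ideal_prod J (I : eqType) (r : seq I) (F : I -> A) :
  is_prime_ideal J -> J (\prod_(i <- r) F i) -> exists2 i, i \in r & J (F i).
Proof.
case=> _ J1 HP; elim: r => [|i r IHr]; first by rewrite big_nil.
rewrite big_cons => /HP [Ji | /IHr [j jr Jj]]; first by exists i; rewrite ?mem_head.
by exists j; rewrite // in_cons jr orbT.
Qed.

Lemma cartier_map0 p e (phi : A -> A) : cartier_map p e phi -> phi 0 = 0.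
Proof. by case=> HD _; apply: (@addrI _ (phi 0)); rewrite -HD !addr0. Qed.

Lemma cartier_mapB p e (phi : A -> A) x y :
  cartier_map p e phi -> phi (x - y) = phi x - phi y.
Proof.
move=> Hphi; have [HD _] := Hphi; apply: (@addIr _ (phi y)).
by rewrite -HD subrK addrNK.
Qed.

Lemma cartier_map_mull p e (phi : A -> A) r :
  cartier_map p e phi -> cartier_map p e (fun x => phi (r * x)).
Proof.
case=> HD HM; split => [x y | a b]; first by rewrite mulrDr HD.
by rewrite mulrCA HM.
Qed.

Lemma cartier_map_mulr p e (phi : A -> A) r :
  cartier_map p e phi -> cartier_map p e (fun x => phi x * r).
Proof.
case=> HD HM; split => [x y | a b]; first by rewrite HD mulrDl.
by rewrite HM mulrA.
Qed.

Lemma cartier_contr_ideal p e J : is_ideal J -> is_ideal (cartier_contr p e J).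
Proof.
move=> HJ; split.
- by move=> phi Hphi; rewrite (cartier_map0 Hphi); apply: ideal0.
- move=> x y Hx Hy phi [HD HM]; rewrite HD.
  by apply: idealD => //; [apply: Hx | apply: Hy].
- by move=> a x Hx phi Hphi; apply: (Hx (fun y => phi (a * y))); apply: cartier_map_mull.
Qed.

Lemma cartier_core_ideal p J : is_ideal J -> is_ideal (cartier_core p J).
Proof.
move=> HJ; have HJs s := cartier_contr_ideal p s HJ; split.
- by move=> s; exact: ideal0 (HJs s).
- by move=> x y Hx Hy s; exact: idealD (HJs s) (Hx s) (Hy s).
- by move=> a x Hx s; exact: idealMl (HJs s) (Hx s).
Qed.

Lemma frob_power_sub_contr p e J x : is_ideal J ->
  frob_power J (p ^ e) x -> cartier_contr p e J x.
Proof.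
move=> HJ; apply: ideal_gen_min; first exact: cartier_contr_ideal.
by move=> _ [y Jy ->] phi [_ HM]; rewrite -[y ^+ _]mulr1 HM; apply: idealMr.
Qed.

End Ideals.

Section IdealMorphism.
Variables (A B : comPzRingType) (rho : {rmorphism A -> B}).
Hypothesis rho_surj : forall y : B, exists x, rho x = y.

Lemma img_pred_ideal J : is_ideal J -> is_ideal (img_pred rho J).
Proof.
move=> HJ; split.
- by exists 0; rewrite ?rmorph0 //; apply: ideal0.
- move=> _ _ [x Jx ->] [y Jy ->].
  by exists (x + y); rewrite ?rmorphD //; apply: idealD.
- move=> a _ [x Jx ->]; have [r <-] := rho_surj a.
  by exists (r * x); rewrite ?rmorphM //; apply: idealMl.
Qed.

Lemma frob_power_img J q x :
  frob_power J q x -> frob_power (img_pred rho J) q (rho x).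
Proof.
have [H0 HD HM] := ideal_gen_ideal
  (fun y => exists2 x, img_pred rho J x & y = x ^+ q).
apply: (@ideal_gen_min _ _ (fun x => frob_power _ q (rho x))).
- split => [|u v Hu Hv|a u Hu]; rewrite ?rmorph0 ?rmorphD ?rmorphM //.
  + exact: HD.
  + exact: HM.
- move=> _ [y Jy ->]; rewrite rmorphXn; apply: ideal_gen_sub.
  by exists (rho y) => //; exists y.
Qed.

(* [J] contains [ker rho], hence is a union of fibres of [rho]. *)
Lemma ideal_gen_img_pull J G x : is_ideal J -> (forall y, rho y = 0 -> J y) ->
  (forall g, G g -> exists2 y, J y & g = rho y) -> ideal_gen G (rho x) -> J x.
Proof.
move=> HJ Jker HG Hx.
have Jfib y z : rho y = rho z -> J z -> J y.
  move=> Eyz Jz; rewrite -(subrK z y); apply: idealD => //.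
  by apply/Jker; rewrite rmorphB Eyz subrr.
pose Jimg b := forall y, rho y = b -> J y.
suff : Jimg (rho x) by apply.
apply: (@ideal_gen_min _ G Jimg _ _ _ Hx).
- split.
  + exact: Jker.
  + move=> b c Hb Hc y Ey; have [z Ez] := rho_surj b.
    apply: (Jfib _ (z + (y - z))); first by rewrite addrC subrK.
    apply: idealD => //; first exact: Hb.
    by apply: Hc; rewrite rmorphB Ey Ez addrC addKr.
  + move=> a b Hb y Ey; have [r Er] := rho_surj a; have [z Ez] := rho_surj b.
    apply: (Jfib _ (r * z)); first by rewrite rmorphM Ey Er Ez.
    by apply: idealMl => //; exact: Hb.
- by move=> g /HG [y Jy ->] z Ez; apply: Jfib Jy.
Qed.

End IdealMorphism.

Section Frobenius.
Variables (R : comNzRingType) (p : nat).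
Hypothesis charR : p \in [pchar R].

Lemma pchar_nat_expn e : (GRing.pchar R).-nat (p ^ e)%N.
Proof. by rewrite pnatX (pnatE _ (pcharf_prime charR)) charR. Qed.

Lemma frobeniusD e (x y : R) : (x + y) ^+ (p ^ e)%N = x ^+ (p ^ e)%N + y ^+ (p ^ e)%N.
Proof. exact: exprDn_pchar (pchar_nat_expn e). Qed.

Lemma frobeniusB e (x y : R) : (x - y) ^+ (p ^ e)%N = x ^+ (p ^ e)%N - y ^+ (p ^ e)%N.
Proof. by rewrite frobeniusD (exprNn_pchar _ (pchar_nat_expn e)). Qed.

Lemma frobenius0 e : (0 : R) ^+ (p ^ e)%N = 0.
Proof. by rewrite expr0n expn_eq0 eqn0Ngt prime_gt0 // (pcharf_prime charR). Qed.

Lemma frobenius_sum e (I : Type) (r : seq I) (P : pred I) (F : I -> R) :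
  (\sum_(i <- r | P i) F i) ^+ (p ^ e)%N = \sum_(i <- r | P i) F i ^+ (p ^ e)%N.
Proof.
by apply: (big_morph (fun x => x ^+ (p ^ e)%N)); [exact: frobeniusD | exact: frobenius0].
Qed.

End Frobenius.

Section FrobeniusSpan.
Variables (K : fieldType) (p : nat).
Hypothesis charK : p \in [pchar K].
Variable e : nat.
Local Notation q := (p ^ e)%N.

Definition frob_span (s : seq K) (x : K) :=
  exists c : 'I_(size s) -> K, x = \sum_(i < size s) c i ^+ q * s`_i.

Lemma frob_span0 s : frob_span s 0.
Proof.
by exists (fun _ => 0); rewrite big1 // => i _; rewrite frobenius0 ?mul0r.
Qed.

Lemma frob_spanD s x y : frob_span s x -> frob_span s y -> frob_span s (x + y).
Proof.
move=> [c ->] [d ->]; exists (fun i => c i + d i); rewrite -big_split /=.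
by apply: eq_bigr => i _; rewrite frobeniusD // mulrDl.
Qed.

Lemma frob_spanZ s a x : frob_span s x -> frob_span s (a ^+ q * x).
Proof.
move=> [c ->]; exists (fun i => a * c i); rewrite mulr_sumr.
by apply: eq_bigr => i _; rewrite exprMn mulrA.
Qed.

Lemma frob_span_sum s (I : Type) (r : seq I) (P : pred I) (F : I -> K) :
  (forall i, P i -> frob_span s (F i)) -> frob_span s (\sum_(i <- r | P i) F i).
Proof. by apply: big_ind; [exact: frob_span0 | exact: frob_spanD]. Qed.

Lemma frob_span_nth s (k : 'I_(size s)) : frob_span s s`_k.
Proof.
exists (fun i => (i == k)%:R); rewrite (bigD1 k) //= eqxx expr1n mul1r big1 ?addr0 //.
by move=> i /negbTE ->; rewrite frobenius0 ?mul0r.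
Qed.

Lemma frob_span_mem s y : y \in s -> frob_span s y.
Proof.
move=> ys; have := frob_span_nth (Ordinal (etrans (index_mem y s) ys)).
by rewrite /= nth_index.
Qed.

Definition frob_spanning (s : seq K) := forall x, frob_span s x.

Lemma frob_spanning_cons s0 s : frob_spanning (s0 :: s) -> frob_span s s0 ->
  frob_spanning s.
Proof.
move=> Hs Hs0 x; have [c ->] := Hs x; rewrite big_ord_recl.
apply: frob_spanD; first exact: frob_spanZ.
by apply: frob_span_sum => i _; apply/frob_spanZ/frob_span_nth.
Qed.

(* Two representations over a spanning sequence [s0 :: s] whose first
   coordinates differ express [s0] in terms of [s] alone. *)
Lemma frob_coord0_uniq s0 s : ~ frob_spanning s ->
  forall c d : 'I_(size (s0 :: s)) -> K,
  \sum_i c i ^+ q * (s0 :: s)`_i = \sum_i d i ^+ q * (s0 :: s)`_i ->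
  frob_spanning (s0 :: s) -> c ord0 = d ord0.
Proof.
move=> Hs c d; rewrite !big_ord_recl /=.
set Sc := \sum_i _; set Sd := \sum_i _ => Ecd Hspan.
apply/eqP/negP => /negP Hne; apply/Hs/(frob_spanning_cons Hspan).
set eps := c ord0 - d ord0.
have eps0 : eps != 0 by rewrite subr_eq0.
have epsq : eps ^+ q != 0 by rewrite expf_neq0.
exists (fun i => (d (lift ord0 i) - c (lift ord0 i)) / eps).
apply: (mulfI epsq); rewrite mulr_sumr.
have -> : eps ^+ q * s0 = Sd - Sc.
  rewrite frobeniusB // mulrBl -(addrK Sc (c ord0 ^+ q * s0)) Ecd.
  by rewrite [d ord0 ^+ q * s0 + Sd]addrC addrAC addrK.
rewrite /Sd /Sc -sumrB; apply: eq_bigr => i _.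
rewrite mulrA -exprMn mulrCA divff // mulr1.
by rewrite frobeniusB // mulrBl.
Qed.

End FrobeniusSpan.

Section FrobeniusFunctional.
Variables (K : fieldType) (p : nat).
Hypothesis charK : p \in [pchar K].
Hypothesis K_Ffin : F_finite_field K p.

Lemma Ffinite_frob_spanning e : exists s : seq K, frob_spanning p e s.
Proof.
elim: e => [|e [s Hs]].
  exists [:: 1] => x; exists (fun _ => x).
  by rewrite big_ord_recl big_ord0 /= expn0 expr1 mulr1 addr0.
have [t Ht] := K_Ffin.
exists [seq u * v | u <- s, v <- map (fun w => w ^+ (p ^ e)%N) t] => x.
have [c ->] := Hs x; apply: frob_span_sum => // i _.
have [d ->] := Ht (c i); rewrite frobenius_sum // mulr_suml.
apply: frob_span_sum => // j _.
rewrite exprMn -exprM -expnS mulrAC -mulrA; apply: frob_spanZ.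
apply: frob_span_mem => //; apply/allpairsP; exists (s`_i, t`_j ^+ (p ^ e)%N).
by split; rewrite ?mem_nth //; apply: map_f; rewrite mem_nth.
Qed.

Lemma minimal_frob_spanning e : exists s : seq K, frob_spanning p e s /\
  forall s' : seq K, frob_spanning p e s' -> (size s <= size s')%N.
Proof.
pose P m := classicb (exists s : seq K, size s = m /\ frob_spanning p e s).
have Pex : exists m, P m.
  by have [s Hs] := Ffinite_frob_spanning e; exists (size s); apply/classicbP; exists s.
case: (ex_minnP Pex) => m /classicbP [s [<- Hs]] Hmin; exists s; split => // s' Hs'.
by apply: Hmin; apply/classicbP; exists s'.
Qed.

(* The first coordinate with respect to a minimal spanning sequence. *)
Lemma frob_functional e : exists2 psi : K -> K, cartier_map p e psi & exists v, psi v = 1.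
Proof.
have [[|s0 s] [Hspan Hmin]] := minimal_frob_spanning e.
  by have [c] := Hspan 1; rewrite big_ord0 => /eqP; rewrite oner_eq0.
have Hs : ~ frob_spanning p e s by move/Hmin; rewrite ltnn.
pose coord0 x a := exists c : 'I_(size (s0 :: s)) -> K,
  c ord0 = a /\ x = \sum_i c i ^+ (p ^ e)%N * (s0 :: s)`_i.
pose psi x := epsilon (inhabits 0) (coord0 x).
have psiE x (c : 'I_(size (s0 :: s)) -> K) :
    x = \sum_i c i ^+ (p ^ e)%N * (s0 :: s)`_i -> psi x = c ord0.
  move=> Ex; have [d [<- Ed]] : coord0 x (psi x).
    by apply: epsilon_spec; have [c' Ec'] := Hspan x; exists (c' ord0), c'.
  by apply: (frob_coord0_uniq charK Hs); rewrite -?Ed -?Ex.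
exists psi; first split.
- move=> x y; have [c Ec] := Hspan x; have [d Ed] := Hspan y.
  rewrite (psiE x c Ec) (psiE y d Ed) (psiE _ (fun i => c i + d i)) //.
  rewrite Ec Ed -big_split /=; apply: eq_bigr => i _.
  by rewrite frobeniusD // mulrDl.
- move=> a b; have [c Ec] := Hspan b.
  rewrite (psiE b c Ec) (psiE _ (fun i => a * c i)) // Ec mulr_sumr.
  by apply: eq_bigr => i _; rewrite exprMn mulrA.
- exists s0; rewrite (psiE s0 (fun i => (i == ord0)%:R)) //.
  rewrite big_ord_recl /= expr1n mul1r big1 ?addr0 // => i _.
  by rewrite frobenius0 ?mul0r.
Qed.

Lemma frob_functional_at e (c : K) : c != 0 ->
  exists2 psi : K -> K, cartier_map p e psi & psi c = 1.
Proof.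
move=> c0; have [psi Hpsi [v psiv]] := frob_functional e.
by exists (fun x => psi (v / c * x)); [exact: cartier_map_mull | rewrite divfK].
Qed.

End FrobeniusFunctional.

Section MonomialIdeals.
Variables (K : fieldType) (n : nat).
Local Notation S := {mpoly K[n]}.
Implicit Types (G : 'X_{1..n} -> Prop) (g h : S).

Definition mmultiple G (a : 'X_{1..n}) := exists2 m, G m & (m <= a)%MM.

Lemma msupp_monomial_ideal G g :
  ideal_gen (fun y : S => exists2 m, G m & y = 'X_[m]) g ->
  forall a, a \in msupp g -> mmultiple G a.
Proof.
apply: (@ideal_gen_min _ _ (fun g : S => forall a, a \in msupp g -> mmultiple G a)).
- split.
  + by move=> a; rewrite -mpolyC0 msupp0.
  + by move=> x y Hx Hy a /msuppD_le; rewrite mem_cat => /orP [/Hx | /Hy].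
  + move=> r x Hx a /msuppM_le /allpairsP [[m1 m2] /= [_ m2x ->]].
    have [m Gm le] := Hx _ m2x; exists m => //.
    exact: lepm_trans le (lem_addl _ _).
- move=> _ [m Gm ->] a; rewrite msuppX mem_seq1 => /eqP ->.
  by exists m => //; apply: lepm_refl.
Qed.

Lemma monomial_ideal_mmultiple G a : mmultiple G a ->
  ideal_gen (fun y : S => exists2 m, G m & y = 'X_[m]) 'X_[a].
Proof.
move=> [m Gm le]; rewrite -(submK le) mpolyXD.
by apply: (idealMl _ (ideal_gen_ideal _)); apply: ideal_gen_sub; exists m.
Qed.

Definition mpart (P : pred 'X_{1..n}) g : S := \sum_(a <- msupp g | P a) g@_a *: 'X_[a].

Lemma mpartC (P : pred 'X_{1..n}) g : g = mpart P g + mpart (predC P) g.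
Proof. by rewrite {1}(mpolyE g) (bigID P). Qed.

Lemma mcoeff_mpart (P : pred 'X_{1..n}) g a : (mpart P g)@_a = if P a then g@_a else 0.
Proof.
rewrite raddf_sum big_mkcond /=.
have [Ha | Ha] := boolP (a \in msupp g).
  rewrite (bigD1_seq a) ?msupp_uniq //= big1 ?addr0 => [|b ba].
    by case: ifP; rewrite ?mcoeffZ ?mcoeffX ?eqxx ?mulr1 ?mcoeff0.
  by case: ifP => _; rewrite ?mcoeffZ ?mcoeffX ?mcoeff0 // (negbTE ba) mulr0.
rewrite big1_seq => [|b /andP [_ Hb]]; first by rewrite (memN_msupp_eq0 Ha) if_same.
case: ifP => _; rewrite ?mcoeff0 // mcoeffZ mcoeffX; case: eqP => [Eba|]; last by rewrite mulr0.
by move: Ha; rewrite -Eba Hb.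
Qed.

Lemma msupp_mpartP (P : pred 'X_{1..n}) g a :
  (a \in msupp (mpart P g)) = P a && (a \in msupp g).
Proof. by rewrite !mcoeff_msupp mcoeff_mpart; case: (P a); rewrite ?eqxx. Qed.

End MonomialIdeals.

Section CartierMpoly.
Variables (K : fieldType) (p : nat).
Hypothesis charK : p \in [pchar K].
Variables (n e : nat) (psi : K -> K).
Hypothesis psi_cartier : cartier_map p e psi.
Variable t : 'X_{1..n}.
Local Notation S := {mpoly K[n]}.
Local Notation q := (p ^ e)%N.

Let q_gt0 : (0 < q)%N.
Proof. by rewrite expn_gt0 prime_gt0 // (pcharf_prime charK). Qed.

Definition mdivq (a : 'X_{1..n}) : 'X_{1..n} := [multinom (a i %/ q)%N | i < n].

Definition mcongq (a : 'X_{1..n}) : bool := [forall i, (a i %% q)%N == t i].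

(* As [x^a = (x^(a %/ q))^q * x^(a %% q)], this takes the [x^t]-component of
   [g] over [S^q] and replaces each coefficient [c x^(q b)] by [psi c x^b]. *)
Definition cartier_mpoly (g : S) : S :=
  \sum_(a <- msupp g | mcongq a) psi g@_a *: 'X_[mdivq a].

Lemma cartier_mpoly_seq (g : S) (r : seq 'X_{1..n}) : uniq r -> {subset msupp g <= r} ->
  cartier_mpoly g = \sum_(a <- r | mcongq a) psi g@_a *: 'X_[mdivq a].
Proof.
move=> r_uniq sub_gr; rewrite /cartier_mpoly.
rewrite -(perm_big _ (permEl (perm_filterC (mem (msupp g)) r))) big_cat /=.
rewrite [X in _ = _ + X]big1_seq ?addr0; last first.
  move=> a /andP [_]; rewrite mem_filter => /andP [/= Ha _].
  by rewrite memN_msupp_eq0 // (cartier_map0 psi_cartier) scale0r.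
apply: perm_big; apply: uniq_perm; [exact: msupp_uniq | exact: filter_uniq |].
by move=> a; rewrite mem_filter /=; case Ha: (a \in msupp g) => //=; rewrite sub_gr.
Qed.

Lemma cartier_mpolyD (g h : S) :
  cartier_mpoly (g + h) = cartier_mpoly g + cartier_mpoly h.
Proof.
set r := undup (msupp g ++ msupp h).
have sub_g : {subset msupp g <= r} by move=> a Ha; rewrite mem_undup mem_cat Ha.
have sub_h : {subset msupp h <= r} by move=> a Ha; rewrite mem_undup mem_cat Ha orbT.
have sub_gh : {subset msupp (g + h) <= r} by move=> a /msuppD_le; rewrite mem_undup.
rewrite !(@cartier_mpoly_seq _ r) ?undup_uniq // -big_split /=.
by apply: eq_bigr => a _; rewrite mcoeffD (proj1 psi_cartier) scalerDl.
Qed.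

Lemma cartier_mpoly_sum (I : Type) (r : seq I) (P : pred I) (F : I -> S) :
  cartier_mpoly (\sum_(i <- r | P i) F i) = \sum_(i <- r | P i) cartier_mpoly (F i).
Proof.
apply: (big_morph cartier_mpoly cartier_mpolyD).
by rewrite /cartier_mpoly -mpolyC0 msupp0 big_nil.
Qed.

Lemma cartier_mpolyZX c a :
  cartier_mpoly (c *: 'X_[a]) = if mcongq a then psi c *: 'X_[mdivq a] else 0.
Proof.
rewrite (@cartier_mpoly_seq _ [:: a]) //; last by move=> b /msuppZ_le; rewrite msuppX.
by rewrite big_mkcond big_seq1 mcoeffZ mcoeffX eqxx mulr1.
Qed.

Lemma mcongqDX b a : mcongq (b *+ q + a)%MM = mcongq a.
Proof. by apply: eq_forallb => i; rewrite mnmDE mulmnE modnMDl. Qed.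

Lemma mdivqDX b a : mdivq (b *+ q + a)%MM = (b + mdivq a)%MM.
Proof. by apply/mnmP => i; rewrite mnmDE !mnmE mulmnE divnMDl. Qed.

Lemma cartier_mpoly_frobZX c d b a :
  cartier_mpoly ((c *: 'X_[b]) ^+ q * (d *: 'X_[a])) = c *: 'X_[b] * cartier_mpoly (d *: 'X_[a]).
Proof.
have -> : (c *: 'X_[b]) ^+ q * (d *: 'X_[a]) = (c ^+ q * d) *: 'X_[b *+ q + a] :> S.
  by rewrite exprZn mpolyXn -!mul_mpolyC mpolyCM mpolyXD; ring.
rewrite !cartier_mpolyZX mcongqDX mdivqDX; case: ifP => _; last by rewrite mulr0.
by rewrite (proj2 psi_cartier) -!mul_mpolyC mpolyCM mpolyXD; ring.
Qed.

Lemma cartier_mpoly_map : cartier_map p e cartier_mpoly.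
Proof.
split; first exact: cartier_mpolyD.
move=> y g; rewrite [in LHS](mpolyE y) [in LHS](mpolyE g).
rewrite frobenius_sum ?pchar_lalg // mulr_suml cartier_mpoly_sum.
rewrite [in RHS](mpolyE y) mulr_suml; apply: eq_bigr => b _.
rewrite mulr_sumr cartier_mpoly_sum [in RHS](mpolyE g) cartier_mpoly_sum mulr_sumr.
by apply: eq_bigr => a _; apply: cartier_mpoly_frobZX.
Qed.

Lemma mdivq_inj a b : mcongq a -> mcongq b -> mdivq a = mdivq b -> a = b.
Proof.
move=> /forallP Ha /forallP Hb /mnmP Eab; apply/mnmP => i.
have := Eab i; rewrite !mnmE => Ediv.
by rewrite (divn_eq (a i) q) (divn_eq (b i) q) Ediv (eqP (Ha i)) (eqP (Hb i)).
Qed.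

Lemma mcoeff_cartier_mpoly (g : S) b : mcongq b ->
  (cartier_mpoly g)@_(mdivq b) = psi g@_b.
Proof.
move=> Hb; set r := undup (b :: msupp g).
have sub_gr : {subset msupp g <= r} by move=> a Ha; rewrite mem_undup in_cons Ha orbT.
rewrite (@cartier_mpoly_seq _ r) ?undup_uniq // raddf_sum big_mkcond /=.
rewrite (bigD1_seq b) ?mem_undup ?mem_head ?undup_uniq //= Hb.
rewrite mcoeffZ mcoeffX eqxx mulr1 big1 ?addr0 // => a ab; case: ifP => // Ha.
rewrite mcoeffZ mcoeffX; case: eqP => [Eab | _]; last by rewrite mulr0.
by move: ab; rewrite (mdivq_inj Ha Hb Eab) eqxx.
Qed.

Lemma msupp_cartier_mpoly (g : S) a' : a' \in msupp (cartier_mpoly g) ->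
  exists2 a, a \in msupp g & a' = mdivq a.
Proof.
move=> /msupp_sum_le /flattenP [s /mapP [a]]; rewrite mem_filter => /andP [_ Ha] ->.
by move=> /msuppZ_le; rewrite msuppX mem_seq1 => /eqP ->; exists a.
Qed.

End CartierMpoly.

Section MonomialPrime.
Variables (K : fieldType) (n : nat).
Local Notation S := {mpoly K[n]}.
Variables (I : S -> Prop) (M : 'X_{1..n} -> Prop).
Hypothesis M_sqfree : forall m, M m -> forall i : 'I_n, (m i <= 1)%N.
Hypothesis I_gen : forall x, I x <-> ideal_gen (fun y => exists2 m, M m & y = 'X_[m]) x.
Variables (R : comPzRingType) (pi : {rmorphism S -> R}).
Hypothesis pi_surj : forall y : R, exists x, pi x = y.
Hypothesis pi_ker : forall x, pi x = 0 <-> I x.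
Variables (qq : R -> Prop) (Mq : 'X_{1..n} -> Prop).
Hypothesis qq_prime : is_prime_ideal qq.
Hypothesis qq_gen : forall x, qq x <-> ideal_gen (fun y => exists2 m, Mq m & y = pi 'X_[m]) x.

Let qq_ideal : is_ideal qq. Proof. by case: qq_prime. Qed.

Lemma I_ideal : is_ideal I.
Proof.
have [H0 HD HM] := ideal_gen_ideal (fun y : S => exists2 m, M m & y = 'X_[m]).
split; first exact/I_gen.
- by move=> x y /I_gen Hx /I_gen Hy; apply/I_gen; apply: HD.
- by move=> a x /I_gen Hx; apply/I_gen; apply: HM.
Qed.

Definition mvanish (a : 'X_{1..n}) := I 'X_[a].

Lemma mvanish_mmultiple a : mvanish a <-> mmultiple M a.
Proof.
split=> [/I_gen Ha | Ha]; last by apply/I_gen; apply: monomial_ideal_mmultiple.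
by apply: (msupp_monomial_ideal Ha); rewrite msuppX mem_seq1.
Qed.

(* This is where squarefreeness of [I] is used. *)
Lemma mvanish_supp (a b : 'X_{1..n}) : (forall i, (0 < a i)%N -> (0 < b i)%N) ->
  mvanish a -> mvanish b.
Proof.
move=> Hab /mvanish_mmultiple [m Mm le]; apply/mvanish_mmultiple; exists m => //.
apply/mnm_lepP => i; have := M_sqfree Mm i; have := mnm_lepP le i.
by case: (m i) => [|[|k]] //= H _; apply: Hab.
Qed.

Lemma I_msupp_vanish g : I g -> forall a, a \in msupp g -> mvanish a.
Proof. by move=> /I_gen Hg a Ha; apply/mvanish_mmultiple; apply: msupp_monomial_ideal Ha. Qed.

Definition qvar (i : 'I_n) := qq (pi 'X_i).

Lemma qq_monomialP a : qq (pi 'X_[a]) <-> exists i, (0 < a i)%N /\ qvar i.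
Proof.
split.
- rewrite mpolyXE_id rmorph_prod => /(prime_ideal_prod qq_prime) [i _].
  rewrite rmorphXn; case Hai: (a i) => [|k]; first by rewrite expr0; case: qq_prime.
  by move=> /(prime_idealX qq_prime) Hi; exists i; rewrite Hai.
- move=> [i [Hai Hi]]; have le : (U_(i) <= a)%MM by rewrite lep1mP -lt0n.
  by rewrite -(submK le) mpolyXD rmorphM; apply: idealMl.
Qed.

Definition qq_supported (h : S) := forall a : 'X_{1..n}, a \in msupp h ->
  (exists i, (0 < a i)%N /\ qvar i) \/ mvanish a.

Lemma qq_supported_ideal : is_ideal qq_supported.
Proof.
split.
- by move=> a; rewrite -mpolyC0 msupp0.
- by move=> x y Hx Hy a /msuppD_le; rewrite mem_cat => /orP [/Hx | /Hy].
- move=> r y Hy a /msuppM_le /allpairsP [[m1 m2] /= [_ m2y ->]].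
  case: (Hy _ m2y) => [[i [Hi Hqi]] | Hm2]; [left | right].
  + by exists i; rewrite mnmDE addn_gt0 Hi orbT.
  + by apply: mvanish_supp Hm2 => i; rewrite mnmDE addn_gt0 => ->; rewrite orbT.
Qed.

Lemma qq_preim_supported h : qq (pi h) -> qq_supported h.
Proof.
move=> /qq_gen; apply: ideal_gen_img_pull => //; first exact: qq_supported_ideal.
  by move=> g /pi_ker Ig a Ha; right; apply: I_msupp_vanish Ig a Ha.
move=> _ [m Mqm ->]; exists 'X_[m] => // a; rewrite msuppX mem_seq1 => /eqP ->.
by left; apply/qq_monomialP/qq_gen; apply: ideal_gen_sub; exists m.
Qed.

(* [x^mout] is the product of the variables not in [qq]. *)
Definition mout : 'X_{1..n} := [multinom (~~ classicb (qvar i) : nat) | i < n].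

Lemma mout_gt0 i : (0 < mout i)%N <-> ~ qvar i.
Proof. by rewrite mnmE; case: classicbP. Qed.

Lemma mout_notin_qq : ~ qq (pi 'X_[mout]).
Proof. by move/qq_monomialP => [i [/mout_gt0]]. Qed.

Lemma mout_not_vanish : ~ mvanish mout.
Proof. by move=> /pi_ker H; apply: mout_notin_qq; rewrite H; apply: ideal0. Qed.

(* [qq] is generated by variables, so it contains no nonzero polynomial in the
   remaining variables. *)
Lemma qq_outside_eq0 h : (forall a, a \in msupp h -> forall i, (0 < a i)%N -> ~ qvar i) ->
  qq (pi h) -> h = 0.
Proof.
move=> Hh /qq_preim_supported Hs; apply/eqP; rewrite -msupp_eq0.
case E: (msupp h) => [// | a s]; have Ha : a \in msupp h by rewrite E mem_head.
case: (Hs a Ha) => [[i [Hi Hqi]] | Ha0]; first by case: (Hh a Ha i Hi).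
case: mout_not_vanish; apply: mvanish_supp Ha0 => i Hi; apply/mout_gt0.
exact: Hh Ha i Hi.
Qed.

Lemma ann_mout_qq (c : 'X_{1..n}) r : (forall i, (0 < mout i)%N -> (0 < c i)%N) -> ~ mvanish c ->
  pi 'X_[c] * r = 0 -> qq r.
Proof.
move=> Hc Hnc; have [h <-] := pi_surj r; rewrite -rmorphM => /pi_ker Ich.
rewrite {1}(mpolyE h) rmorph_sum big_seq; apply: ideal_sum => // a Ha.
rewrite -mul_mpolyC rmorphM; apply: idealMl => //.
case: (classic (exists i, (0 < a i)%N /\ qvar i)) => [Ha' | Ha'].
  exact/qq_monomialP.
case: Hnc; have Hca : mvanish (c + a).
  by apply: (I_msupp_vanish Ich); rewrite mcoeff_msupp mulrC mcoeffMX -mcoeff_msupp.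
apply: mvanish_supp Hca => i; rewrite mnmDE addn_gt0 => /orP [// | Hai].
by apply/Hc/mout_gt0 => Hqi; apply: Ha'; exists i.
Qed.

(* [x_i] is a nonzerodivisor on the monomials of [R] divisible by [mout]. *)
Definition mout_regular (i : 'I_n) :=
  forall g, ~ mvanish (g + mout) -> ~ mvanish (g + mout + U_(i))%MM.

(* If [x^(g + mout) x_i = 0] then [x^(g + mout) phi (x_i)] is
   [phi (x^(q (g + mout)) x_i) = 0], and the annihilator of [x^(g + mout)] lies
   in [qq]. *)
Lemma nonregular_core p i : (0 < p)%N -> ~ mout_regular i ->
  cartier_core p qq (pi 'X_i).
Proof.
move=> p_gt0 Hi; have [g Hgi] := not_all_ex_not _ _ Hi.
have [Hg /NNPP {}Hgi] := imply_to_and _ _ Hgi; move=> s phi Hphi.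
have Hu : pi 'X_[g + mout] * pi 'X_i = 0 by rewrite -rmorphM -mpolyXD; apply/pi_ker.
apply: (@ann_mout_qq (g + mout)%MM) => //.
  by move=> j Hj; rewrite mnmDE addn_gt0 Hj orbT.
have ps_gt0 : (0 < p ^ s)%N by rewrite expn_gt0 p_gt0.
case: (Hphi) => _ HM; rewrite -HM -(prednK ps_gt0) exprS mulrAC Hu mul0r.
exact: cartier_map0 Hphi.
Qed.

Lemma mout_regular_sum (l : seq 'I_n) : (forall i, i \in l -> mout_regular i) ->
  forall g, ~ mvanish (g + mout) -> ~ mvanish (g + mout + \sum_(i <- l) U_(i))%MM.
Proof.
elim: l => [|i l IHl] Hl g Hg; first by rewrite big_nil addm0.
have Hgi : ~ mvanish (g + U_(i) + mout)%MM.
  have -> : (g + U_(i) + mout = g + mout + U_(i))%MM.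
    by apply/mnmP => j; rewrite !mnmDE; lia.
  by apply: Hl; rewrite ?mem_head.
have := IHl (fun j jl => Hl j (mem_behead (s := i :: l) jl)) _ Hgi.
suff -> : (g + U_(i) + mout + \sum_(j <- l) U_(j) = g + mout + \sum_(j <- i :: l) U_(j))%MM.
  by [].
by apply/mnmP => j; rewrite big_cons !mnmDE; lia.
Qed.

Variable p : nat.
Hypothesis charK : p \in [pchar K].
Hypothesis K_Ffin : F_finite_field K p.
Variable e : nat.
Local Notation q := (p ^ e)%N.

Let p_gt0 : (0 < p)%N.
Proof. exact/prime_gt0/(pcharf_prime charK). Qed.

Let q_gt0 : (0 < q)%N.
Proof. by rewrite expn_gt0 p_gt0. Qed.

Section Descent.
Variables (psi : K -> K) (t : 'X_{1..n}).
Hypothesis psi_cartier : cartier_map p e psi.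
Hypothesis t_regular : forall i, (0 < t i)%N -> mout_regular i.

Local Notation phi g := (cartier_mpoly p e psi t g * 'X_[mout]).

Lemma cartier_mpoly_I g : I g -> I (phi g).
Proof.
move=> Ig; have I_id := I_ideal.
rewrite {1}(mpolyE g) (cartier_mpoly_sum psi_cartier) mulr_suml big_seq.
apply: ideal_sum => // a Ha.
rewrite (cartier_mpolyZX psi_cartier); case: ifP => [Ha_cong | _]; last first.
  by rewrite mul0r; apply: ideal0.
rewrite -mul_mpolyC -mulrA -mpolyXD; apply: idealMl => //; apply: NNPP => Hnot.
pose l := [seq i <- enum 'I_n | (0 < t i)%N].
apply: (mout_regular_sum (l := l) _ Hnot).
  by move=> i; rewrite mem_filter => /andP [/t_regular].
apply: mvanish_supp (I_msupp_vanish Ig Ha) => i ai_gt0; rewrite !mnmDE.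
have [ti0 | ti_gt0] := posnP (t i).
- have := forallP Ha_cong i; rewrite ti0 => /eqP ai_mod.
  suff : (0 < mdivq p e a i)%N by lia.
  by rewrite mnmE divn_gt0 // dvdn_leq // /dvdn ai_mod.
- suff : (0 < (\sum_(j <- l) U_(j))%MM i)%N by lia.
  rewrite mnm_sumE (bigD1_seq i) /= ?mnm1E ?eqxx //.
    by rewrite mem_filter ti_gt0 mem_enum.
  by rewrite filter_uniq // enum_uniq.
Qed.

Lemma cartier_mpoly_descends : exists2 phiR : R -> R,
  cartier_map p e phiR & forall g, phiR (pi g) = pi (phi g).
Proof.
have phi_map : cartier_map p e (fun g => phi g).
  exact/cartier_map_mulr/cartier_mpoly_map.
have pi_surjb y : exists x, pi x == y by have [x <-] := pi_surj y; exists x.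
pose phiR y := pi (phi (xchoose (pi_surjb y))).
have phiRE g : phiR (pi g) = pi (phi g).
  apply/eqP; rewrite -subr_eq0 -rmorphB -(cartier_mapB _ _ phi_map).
  apply/eqP/pi_ker/cartier_mpoly_I/pi_ker.
  by rewrite rmorphB (eqP (xchooseP (pi_surjb (pi g)))) subrr.
exists phiR => //; split.
- move=> x y; have [gx <-] := pi_surj x; have [gy <-] := pi_surj y.
  by rewrite -rmorphD !phiRE (proj1 phi_map) rmorphD.
- move=> a b; have [ga <-] := pi_surj a; have [gb <-] := pi_surj b.
  by rewrite -rmorphXn -rmorphM !phiRE (proj2 phi_map) rmorphM.
Qed.

End Descent.

Lemma frob_power_monomial (c : K) (a : 'X_{1..n}) i : qvar i -> (q <= a i)%N ->
  frob_power qq q (pi (c *: 'X_[a])).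
Proof.
move=> qi le_q_ai; have le : (U_(i) *+ q <= a)%MM.
  by apply/mnm_lepP => j; rewrite mulmnE mnm1E; case: eqP => [<- | _]; rewrite ?mul1n ?mul0n.
rewrite -mul_mpolyC -(submK le) mpolyXD -mpolyXn !rmorphM rmorphXn.
do 2!apply: (idealMl _ (ideal_gen_ideal _)).
by apply: ideal_gen_sub; exists (pi 'X_i).
Qed.

Lemma cartier_core_monomial (c : K) (a : 'X_{1..n}) i : ~ mout_regular i -> (0 < a i)%N ->
  cartier_core p qq (pi (c *: 'X_[a])).
Proof.
move=> Hi ai_gt0; have le : (U_(i) <= a)%MM by rewrite lep1mP -lt0n.
have core_id := cartier_core_ideal p qq_ideal.
rewrite -mul_mpolyC -(submK le) mpolyXD !rmorphM.
by do 2!apply: (idealMl _ core_id); apply: nonregular_core.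
Qed.

(* For a monomial [x^b] of [h], a functional [psi] with [psi h_b = 1] and
   [t = b mod q] give a Cartier map sending [h] to a nonzero polynomial in the
   variables outside [qq], times [x^mout], hence outside [qq]. *)
Lemma reduced_contr_eq0 h :
  (forall a, a \in msupp h -> forall i, qvar i -> (a i < q)%N) ->
  (forall a, a \in msupp h -> forall i, (0 < a i)%N -> mout_regular i) ->
  cartier_contr p e qq (pi h) -> h = 0.
Proof.
move=> h_low h_reg h_contr; apply/eqP; rewrite -msupp_eq0.
case E: (msupp h) => [// | b s]; have hb : b \in msupp h by rewrite E mem_head.
pose t : 'X_{1..n} := [multinom (b i %% q)%N | i < n].
have t_reg i : (0 < t i)%N -> mout_regular i.
  rewrite mnmE !lt0n => bi_mod; apply: (h_reg b hb).
  by rewrite lt0n; apply: contra bi_mod => /eqP ->; rewrite mod0n.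
have hb0 : h@_b != 0 by rewrite -mcoeff_msupp.
have [psi psi_cartier psib] := frob_functional_at charK K_Ffin e hb0.
have [phiR phiR_cartier phiRE] := cartier_mpoly_descends psi_cartier t_reg.
set P := cartier_mpoly p e psi t h.
have qqP : qq (pi P).
  have := h_contr _ phiR_cartier; rewrite phiRE rmorphM.
  by case: qq_prime => _ _ Hprime /Hprime [// | /mout_notin_qq].
have P0 : P = 0.
  apply: qq_outside_eq0 qqP => _ /msupp_cartier_mpoly [a ha ->] i.
  by rewrite mnmE divn_gt0 // leqNgt => /negP Ha /(h_low a ha).
have bt : mcongq p e t b by apply/forallP => i; rewrite mnmE.
have := mcoeff_cartier_mpoly psi_cartier h bt.
by rewrite -/P P0 mcoeff0 psib => /eqP; rewrite eq_sym oner_eq0.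
Qed.

Lemma cartier_contr_decomp f : cartier_contr p e qq f ->
  exists f1 f2, [/\ f = f1 + f2, frob_power qq q f1 & cartier_core p qq f2].
Proof.
have [h <-] := pi_surj f => h_contr.
pose in_frob (a : 'X_{1..n}) := [exists i, classicb (qvar i) && (q <= a i)%N].
pose in_core (a : 'X_{1..n}) := [exists i, (0 < a i)%N && ~~ classicb (mout_regular i)].
set h1 := mpart in_frob h; set h' := mpart (predC in_frob) h.
set h2 := mpart in_core h'; set h3 := mpart (predC in_core) h'.
have Eh : h = h1 + h2 + h3 by rewrite -addrA -mpartC -mpartC.
have frob_h1 : frob_power qq q (pi h1).
  rewrite rmorph_sum big_seq_cond; apply: ideal_sum; first exact: ideal_gen_ideal.
  by move=> a /andP [_ /existsP [i /andP [/classicbP qi le]]]; apply: frob_power_monomial le.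
have core_h2 : cartier_core p qq (pi h2).
  rewrite rmorph_sum big_seq_cond; apply: ideal_sum; first exact: cartier_core_ideal.
  by move=> a /andP [_ /existsP [i /andP [ai /classicbP Hi]]]; apply: cartier_core_monomial ai.
suff h3_0 : h3 = 0 by exists (pi h1), (pi h2); rewrite Eh h3_0 addr0 rmorphD.
have contr_id := cartier_contr_ideal p e qq_ideal.
apply: reduced_contr_eq0.
- move=> a; rewrite !msupp_mpartP => /and3P [_ /existsPn Ha _] i qi.
  by have := Ha i; rewrite ltnNge; case: classicbP.
- move=> a; rewrite !msupp_mpartP => /andP [/existsPn Ha _] i ai.
  by have := Ha i; rewrite ai /=; case: classicbP.
- have -> : pi h3 = pi h - pi h1 - pi h2 by rewrite Eh !rmorphD; ring.
  apply: (idealB contr_id); last exact: core_h2 e.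
  by apply: (idealB contr_id) => //; apply: frob_power_sub_contr.
Qed.

End MonomialPrime.

Theorem mainTheorem12
  (K : fieldType) (p : nat) (p_prime : prime p) (charK : p \in [pchar K])
  (K_Ffin : F_finite_field K p)
  (n : nat) (I : {mpoly K[n]} -> Prop) (I_sqfree : sqfree_monomial_ideal I)
  (R : comPzRingType) (pi : {rmorphism {mpoly K[n]} -> R})
  (pi_surj : forall y : R, exists x, pi x = y)
  (pi_ker : forall x, pi x = 0 <-> I x)
  (qq : R -> Prop) (qq_prime : is_prime_ideal qq)
  (qq_mon : monomial_ideal_of pi qq)
  (Rbar : comPzRingType) (rho : {rmorphism R -> Rbar})
  (rho_surj : forall y : Rbar, exists x, rho x = y)
  (rho_ker : forall x, rho x = 0 <-> cartier_core p qq x)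
  (e : nat) (f : R) :
  (cartier_contr p e qq f -> cartier_contr p e (img_pred rho qq) (rho f)) /\
  (frob_power (img_pred rho qq) (p ^ e) (rho f) <-> cartier_contr p e qq f).
Proof.
have [M [M_sqfree I_gen]] := I_sqfree; have [Mq qq_gen] := qq_mon.
have qq_ideal : is_ideal qq by case: qq_prime.
have contr_frob : cartier_contr p e qq f -> frob_power (img_pred rho qq) (p ^ e) (rho f).
  move=> /(cartier_contr_decomp M_sqfree I_gen pi_surj pi_ker qq_prime qq_gen charK K_Ffin).
  move=> [f1 [f2 [-> frob_f1 /rho_ker rho_f2]]].
  by rewrite rmorphD rho_f2 addr0; apply: frob_power_img.
split=> [f_contr | ]; last split=> // frob_f.
  by apply: frob_power_sub_contr (contr_frob f_contr); apply: img_pred_ideal.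
apply: (ideal_gen_img_pull rho_surj (cartier_contr_ideal p e qq_ideal) _ _ frob_f).
  by move=> y /rho_ker; apply.
move=> _ [_ [x qx ->] ->]; exists (x ^+ (p ^ e)); rewrite ?rmorphXn //.
by apply: frob_power_sub_contr => //; apply: ideal_gen_sub; exists x.
Qed.
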